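(* Let $0\le\theta\le1$. (i) If $0\le\theta\le1/3$, then for every $\epsilon>0$ there exists a weighted digraph $D$ with $w(D)>0$ and $\theta(D)=\theta$ such that $\mathrm{mac}(D)<(1+\epsilon)\,l(\theta)\,w(D)$. (ii) If $1/3<\theta\le1$, then there exists a weighted digraph $D$ with $w(D)>0$ and $\theta(D)=\theta$ such that $\mathrm{mac}(D)=\theta\cdot w(D)$ $(=l(\theta)w(D))$.
   Context: A weighted digraph $D=(V,A,w)$ is a digraph without loops or parallel arcs (opposite arcs allowed) with weights $w:A\to\mathbb{R}_{\ge0}$; $w(D)$ is the total arc weight. For a partition $(X,Y)$ of $V$, $w(X,Y)$ is the total weight of arcs from $X$ to $Y$, and $\mathrm{mac}(D)=\max_{(X,Y)}w(X,Y)$. For $v\in V$, $r(v)=w^+(v)-w^-(v)$ (total weight leaving minus total weight entering $v$); $r^+(D)=\sum_{r(x)>0}r(x)$; $\theta(D)=r^+(D)/w(D)$. For $0\le\theta\le1$, $l(\theta)=\frac14+\frac{\theta^2}{4(1-2\theta)}$ if $\theta<1/3$ and $l(\theta)=\theta$ if $\theta\ge1/3$. *)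

From HB Require Import structures.
From mathcomp Require Import all_boot all_order all_algebra.
Set Implicit Arguments. Unset Strict Implicit. Unset Printing Implicit Defensive.
Import Order.TTheory GRing.Theory Num.Theory.
Local Open Scope ring_scope.

(* A weighted digraph on a finite vertex type V: w x y is the weight of the arc
   x -> y (weight 0 = no arc).
   Parallel arcs are impossible by construction; opposite arcs allowed. *)
Definition is_wdigraph (R : realFieldType) (V : finType) (w : V -> V -> R) : Prop :=
  (forall x, w x x = 0) /\ (forall x y, 0 <= w x y).

Definition wtot (R : realFieldType) (V : finType) (w : V -> V -> R) : R :=
  \sum_(x : V) \sum_(y : V) w x y.

Definition wcut (R : realFieldType) (V : finType) (w : V -> V -> R) (X : {set V}) : R :=
  \sum_(x in X) \sum_(y in ~: X) w x y.

Definition mac (R : realFieldType) (V : finType) (w : V -> V -> R) : R :=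
  \big[Num.max/0]_(X : {set V}) wcut w X.

Definition rdeg (R : realFieldType) (V : finType) (w : V -> V -> R) (v : V) : R :=
  \sum_(y : V) w v y - \sum_(x : V) w x v.

Definition rplus (R : realFieldType) (V : finType) (w : V -> V -> R) : R :=
  \sum_(x : V | 0 < rdeg w x) rdeg w x.

Definition thetaD (R : realFieldType) (V : finType) (w : V -> V -> R) : R :=
  rplus w / wtot w.

Definition lfun (R : realFieldType) (t : R) : R :=
  if t < 3^-1 then 4^-1 + t ^+ 2 / (4 * (1 - 2 * t)) else t.

From mathcomp Require Import all_boot all_order all_algebra.
From mathcomp Require Import reals.
From mathcomp Require Import ring lra.
Import Order.TTheory GRing.Theory Num.Theory.
Local Open Scope ring_scope.

(* Both parts are witnessed by the same family of "two-block" digraphs.  Take two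
   blocks A and B of n vertices each; inside each block every ordered pair of
   distinct vertices carries an arc of weight be, and every pair a in A, b in B
   carries an arc a -> b of weight ga.  Then
     w(D) = 2 be n (n-1) + ga n^2,   r = ga n on A and -ga n on B,
   so theta(D) = ga n^2 / w(D), and a set X meeting A in a and B in b vertices cuts
     be (a (n-a) + b (n-b)) + ga a (n-b).
   (i)  For theta <= 1/3 take be = 1 and ga chosen so that theta(D) = theta; a
        sum-of-squares identity bounds every cut by n^2 / (2 - ga), which is
        within a factor 1 + O(1/n) of l(theta) w(D).
   (ii) For theta > 1/3 take ga = 1 and be <= 1 (possible once n is large); then
        every cut is at most n^2 = theta w(D), attained by X = A. *)

Section TwoBlock.
Variables (R : realFieldType) (n : nat) (be ga : R).

(* Vertex (true, i) lies in block A, vertex (false, i) in block B. *)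
Definition twoBlock (x y : bool * 'I_n) : R :=
  if x.1 == y.1 then (if x.2 == y.2 then 0 else be) else (if x.1 then ga else 0).

Lemma twoBlock_wdigraph : 0 <= be -> 0 <= ga -> is_wdigraph twoBlock.
Proof.
move=> be_ge0 ga_ge0; split; first by move=> x; rewrite /twoBlock !eqxx.
by move=> x y; rewrite /twoBlock; do 2 case: ifP.
Qed.

Lemma sum_blocks (P : pred (bool * 'I_n)) (F : bool * 'I_n -> R) :
  \sum_(x | P x) F x =
    \sum_(i | P (true, i)) F (true, i) + \sum_(i | P (false, i)) F (false, i).
Proof.
rewrite big_mkcond /=.
rewrite (eq_bigr (fun p => (fun b i => if P (b, i) then F (b, i) else 0) p.1 p.2));
  last by case.
rewrite (eq_bigl (fun p => xpredT p.1 && xpredT p.2)) //.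
rewrite -(pair_big xpredT xpredT (fun b i => if P (b, i) then F (b, i) else 0)).
by rewrite big_bool /= -!big_mkcond.
Qed.

Lemma sum_const_card (P : pred 'I_n) (c : R) : \sum_(i | P i) c = c * #|P|%:R.
Proof. by rewrite sumr_const mulr_natr. Qed.

Lemma sum_const_ord (c : R) : \sum_(i < n) c = c * n%:R.
Proof. by rewrite sum_const_card card_ord. Qed.

Lemma sum_inner_block (i : 'I_n) :
  \sum_j (if i == j then 0 else be) = be * (n.-1)%:R.
Proof.
rewrite (bigD1 i) //= eqxx add0r.
rewrite (eq_bigr (fun _ => be)); last by move=> j; rewrite eq_sym => /negbTE ->.
by rewrite sum_const_card -[in n.-1](card_ord n) -(cardC1 i).
Qed.

Lemma outdeg_A i : \sum_y twoBlock (true, i) y = be * (n.-1)%:R + ga * n%:R.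
Proof. by rewrite sum_blocks /twoBlock /= sum_inner_block sum_const_ord. Qed.

Lemma outdeg_B i : \sum_y twoBlock (false, i) y = be * (n.-1)%:R.
Proof. by rewrite sum_blocks /twoBlock /= sum_inner_block big1 ?add0r. Qed.

Lemma indeg_A i : \sum_x twoBlock x (true, i) = be * (n.-1)%:R.
Proof.
rewrite sum_blocks /twoBlock /= [X in _ + X]big1 // addr0.
by under eq_bigr => j _ do rewrite eq_sym; rewrite sum_inner_block.
Qed.

Lemma indeg_B i : \sum_x twoBlock x (false, i) = be * (n.-1)%:R + ga * n%:R.
Proof.
rewrite sum_blocks /twoBlock /= addrC sum_const_ord.
by under eq_bigr => j _ do rewrite eq_sym; rewrite sum_inner_block.
Qed.

Lemma wtot_twoBlock : wtot twoBlock = 2 * be * n%:R * (n.-1)%:R + ga * n%:R ^+ 2.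
Proof.
rewrite /wtot sum_blocks.
under eq_bigr => i _ do rewrite outdeg_A.
under [X in _ + X]eq_bigr => i _ do rewrite outdeg_B.
by rewrite !sum_const_ord; ring.
Qed.

(* Every vertex of A has imbalance ga n, every vertex of B has -ga n. *)
Lemma rplus_twoBlock : 0 <= ga -> rplus twoBlock = ga * n%:R ^+ 2.
Proof.
move=> ga_ge0; have gan_ge0 : 0 <= ga * n%:R by apply: mulr_ge0.
rewrite /rplus sum_blocks.
have rA i : rdeg twoBlock (true, i) = ga * n%:R by rewrite /rdeg outdeg_A indeg_A; ring.
have rB i : rdeg twoBlock (false, i) = - (ga * n%:R) by rewrite /rdeg outdeg_B indeg_B; ring.
under eq_bigl => i do rewrite rA.
under eq_bigr => i _ do rewrite rA.
under [X in _ + X]eq_bigl => i do rewrite rB oppr_gt0 ltNge gan_ge0.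
rewrite [X in _ + X]big_pred0 // addr0.
have [gan_gt0 | gan_le0] := ltP 0 (ga * n%:R).
  by rewrite (eq_bigl xpredT) // sum_const_ord; ring.
have gan0 : ga * n%:R = 0 by apply/le_anti; rewrite gan_le0 gan_ge0.
by rewrite gan0 big1 // expr2 mulrA gan0 mul0r.
Qed.

Lemma thetaD_twoBlock : 0 <= ga -> thetaD twoBlock = ga * n%:R ^+ 2 / wtot twoBlock.
Proof. by move=> ga_ge0; rewrite /thetaD rplus_twoBlock. Qed.

Definition blockCount (X : {set bool * 'I_n}) (b : bool) : R :=
  #|[pred j | (b, j) \in X]|%:R.

Lemma blockCount_ge0 X b : 0 <= blockCount X b.
Proof. exact: ler0n. Qed.

Lemma blockCount_le X b : blockCount X b <= n%:R.
Proof. by rewrite /blockCount ler_nat -[X in (_ <= X)%N]card_ord max_card. Qed.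

Lemma blockCountC (X : {set bool * 'I_n}) b :
  #|[pred j | (b, j) \in ~: X]|%:R = n%:R - blockCount X b.
Proof.
have -> : n%:R = blockCount X b + #|[predC [pred j | (b, j) \in X]]|%:R :> R.
  by rewrite -natrD cardC card_ord.
by rewrite addrAC subrr add0r; congr (_%:R); apply: eq_card => j; rewrite !inE.
Qed.

Lemma cut_inner_block (X : {set bool * 'I_n}) b i : (b, i) \in X ->
  \sum_(j | (b, j) \in ~: X) twoBlock (b, i) (b, j) = be * (n%:R - blockCount X b).
Proof.
move=> iX; rewrite (eq_bigr (fun _ => be)) ?sum_const_card ?blockCountC //.
move=> j; rewrite inE /twoBlock /= eqxx; case: eqP => // <-.
by rewrite iX.
Qed.

Lemma wcut_twoBlock (X : {set bool * 'I_n}) :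
  let a := blockCount X true in let b := blockCount X false in
  wcut twoBlock X = be * (a * (n%:R - a) + b * (n%:R - b)) + ga * (a * (n%:R - b)).
Proof.
rewrite /wcut sum_blocks.
under eq_bigr => i iX.
  rewrite sum_blocks cut_inner_block //.
  rewrite [X in _ + X](eq_bigr (fun _ => ga)) // sum_const_card blockCountC.
  over.
under [X in _ + X]eq_bigr => i iX.
  rewrite sum_blocks cut_inner_block // big1 ?add0r //.
  over.
by rewrite !sum_const_card; rewrite /blockCount; ring.
Qed.

Lemma wcut_twoBlock_A : wcut twoBlock [set x | x.1] = ga * n%:R ^+ 2.
Proof.
rewrite wcut_twoBlock.
have -> : blockCount [set x | x.1] true = n%:R.
  by rewrite /blockCount -[in RHS](card_ord n); congr (_%:R); apply: eq_card => j; rewrite !inE.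
have -> : blockCount [set x | x.1] false = 0.
  by rewrite /blockCount (eq_card0 (A := [pred j | (false, j) \in _])) // => j; rewrite !inE.
ring.
Qed.

End TwoBlock.

Lemma mac_le (R : realFieldType) (V : finType) (w : V -> V -> R) (M : R) :
  0 <= M -> (forall X, wcut w X <= M) -> mac w <= M.
Proof. by move=> M_ge0 cutM; apply: bigmax_le. Qed.

(* Cut bound for be = 1 and cross weight g in [0, 2) (the factor 1 is be, kept so
   the statement matches wcut_twoBlock); as a quadratic form in
   (a, b), n^2 - (2 - g) cut = ((2-g)a - n + g Y/2)^2 + (1 - g^2/4) Y^2 / (2 - g)
   with Y = (2-g) b - n (1-g), a sum of squares. *)
Lemma cut_bound_quadratic (R : realFieldType) (n g a b : R) : 0 <= g -> g < 2 ->
  (2 - g) * (1 * (a * (n - a) + b * (n - b)) + g * (a * (n - b))) <= n ^+ 2.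
Proof.
move=> g_ge0 g_lt2; have g2_gt0 : 0 < 2 - g by lra.
set Xs := (2 - g) * a - n; set Ys := (2 - g) * b - n * (1 - g).
have sos : (2 - g) * n ^+ 2
    - (2 - g) ^+ 2 * (1 * (a * (n - a) + b * (n - b)) + g * (a * (n - b)))
    = (Xs + g * Ys / 2) ^+ 2 + (1 - g ^+ 2 / 4) * Ys ^+ 2.
  by rewrite /Xs /Ys; field.
have sos_ge0 : 0 <= (Xs + g * Ys / 2) ^+ 2 + (1 - g ^+ 2 / 4) * Ys ^+ 2.
  by apply: addr_ge0; [exact: sqr_ge0 | apply: mulr_ge0; [nra | exact: sqr_ge0]].
rewrite -(ler_pM2l g2_gt0) -subr_ge0; move: sos_ge0; rewrite -sos; nra.
Qed.

(* Cut bound for ga = 1 and be in [0, 1] with block counts in [0, n]: the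
   defect n^2 - cut is a nonnegative combination of nonnegative terms. *)
Lemma cut_bound_box (R : realFieldType) (n be a b : R) :
  0 <= be <= 1 -> 0 <= a <= n -> 0 <= b <= n ->
  be * (a * (n - a) + b * (n - b)) + 1 * (a * (n - b)) <= n ^+ 2.
Proof.
move=> /andP[be_ge0 be_le1] /andP[a_ge0 a_len] /andP[b_ge0 b_len].
have t1 : 0 <= (1 - be) * ((n - a) * (n - b)) by apply: mulr_ge0; nra.
have t2 : 0 <= (1 - be) * (b * n) by apply: mulr_ge0; nra.
have t3 : 0 <= be * ((n - a - b / 2) ^+ 2 + 3 / 4 * b ^+ 2).
  by apply: mulr_ge0 => //; apply: addr_ge0; [exact: sqr_ge0 | nra].
have defect : n ^+ 2 - (be * (a * (n - a) + b * (n - b)) + 1 * (a * (n - b)))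
    = (1 - be) * ((n - a) * (n - b)) + (1 - be) * (b * n)
      + be * ((n - a - b / 2) ^+ 2 + 3 / 4 * b ^+ 2).
  by field.
by rewrite -subr_ge0 defect; apply: addr_ge0; [apply: addr_ge0 |].
Qed.

Lemma lfun_small (R : realFieldType) (t : R) : t <= 3^-1 ->
  lfun t = (1 - t) ^+ 2 / (4 * (1 - 2 * t)).
Proof.
move=> t_le; rewrite /lfun; case: ltP => [t_lt | t_ge].
  by field; apply/lt0r_neq0; lra.
have -> : t = 3^-1 by apply/le_anti; rewrite t_le t_ge.
by field.
Qed.

Lemma large_size {R : realType} {x : R} : 0 <= x ->
  exists m : nat, x < (m.+2)%:R /\ (m.+2)%:R >= 2 :> R.
Proof.
move=> x_ge0; exists (Num.Def.archi_bound x).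
have xm := archi_boundP x_ge0.
by rewrite -addn2 natrD; split; [lra | rewrite lerDr].
Qed.

Lemma predn_natr (R : realFieldType) (m : nat) : ((m.+1).-1)%:R = (m.+1)%:R - 1 :> R.
Proof. by rewrite /= -[(m.+1)%N]addn1 natrD addrK. Qed.

(* Part (i): be = 1 and ga = g chosen so that theta(D) = t; with n > (1+eps)/eps
   the bound mac <= n^2 / (2 - g) is below (1 + eps) l(t) w(D). *)
Lemma small_theta_construction (R : realType) (t : R) (t_ge0 : 0 <= t)
    (t_le : t <= 3^-1) (eps : R) (eps_gt0 : 0 < eps) :
  exists (V : finType) (w : V -> V -> R),
    [/\ is_wdigraph w, 0 < wtot w, thetaD w = t &
        mac w < (1 + eps) * lfun t * wtot w].
Proof.
have bound_ge0 : 0 <= (1 + eps) / eps by apply: divr_ge0; lra.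
have [m [m_large n_ge2]] := large_size bound_ge0.
set n : R := (m.+2)%:R in m_large n_ge2.
have n_eps : 1 + eps < eps * n by move: m_large; rewrite ltr_pdivrMr // mulrC.
set g : R := 2 * t * (n - 1) / (n * (1 - t)).
have g_ge0 : 0 <= g by apply: divr_ge0; nra.
have g_le1 : g <= 1 by rewrite ler_pdivrMr; nra.
set w := twoBlock R (m.+2) 1 g.
have W : wtot w = 2 * n * (n - 1) + g * n ^+ 2.
  by rewrite wtot_twoBlock predn_natr -/n; ring.
have W_gt0 : 0 < wtot w by rewrite W; nra.
have theta_w : thetaD w = t.
  rewrite thetaD_twoBlock // -/n W /g; field.
  by apply/and3P; split; apply/lt0r_neq0; nra.
have mac_w : mac w <= n ^+ 2 / (2 - g).
  apply: mac_le => [| X]; first by apply: divr_ge0; nra.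
  rewrite wcut_twoBlock ler_pdivlMr; last lra.
  by rewrite mulrC cut_bound_quadratic //; lra.
exists _, w; split => //; first exact: twoBlock_wdigraph.
apply: (le_lt_trans mac_w); rewrite ltr_pdivrMr; last lra.
have target : (1 + eps) * lfun t * wtot w * (2 - g)
    = (1 + eps) * ((n + t / (1 - 2 * t)) * (n - 1)).
  rewrite lfun_small // W /g; field; apply/and3P; split; apply/lt0r_neq0; lra.
have s_ge0 : 0 <= t / (1 - 2 * t) by apply: divr_ge0; lra.
by rewrite target; nra.
Qed.

(* Part (ii): ga = 1 and be chosen so that theta(D) = t; be <= 1 once
   n >= 2t / (3t - 1), and then the cut X = A is maximum with value n^2. *)
Lemma large_theta_construction (R : realType) (t : R) (t_le1 : t <= 1)
    (t_gt : 3^-1 < t) :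
  exists (V : finType) (w : V -> V -> R),
    [/\ is_wdigraph w, 0 < wtot w, thetaD w = t & mac w = t * wtot w].
Proof.
have t3_gt0 : 0 < 3 * t - 1 by lra.
have bound_ge0 : 0 <= 2 * t / (3 * t - 1) by apply: divr_ge0; lra.
have [m [m_large n_ge2]] := large_size bound_ge0.
set n : R := (m.+2)%:R in m_large n_ge2.
have n_t : 2 * t <= n * (3 * t - 1) by move: m_large; rewrite ltr_pdivrMr // mulrC => /ltW.
set be : R := n * (1 - t) / (2 * t * (n - 1)).
have be_ge0 : 0 <= be by apply: divr_ge0; nra.
have be_le1 : be <= 1 by rewrite ler_pdivrMr; nra.
set w := twoBlock R (m.+2) be 1.
have W : wtot w = 2 * be * n * (n - 1) + 1 * n ^+ 2.
  by rewrite wtot_twoBlock predn_natr.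
have tW : t * wtot w = n ^+ 2.
  by rewrite W /be; field; apply/andP; split; apply/lt0r_neq0; lra.
have W_gt0 : 0 < wtot w by rewrite W; nra.
have mac_w : mac w = n ^+ 2.
  apply/le_anti/andP; split.
    apply: mac_le => [| X]; first by nra.
    rewrite wcut_twoBlock cut_bound_box ?be_ge0 ?blockCount_ge0 ?blockCount_le //.
  by apply: le_trans (le_bigmax _ _ [set x | x.1]); rewrite wcut_twoBlock_A mul1r.
exists _, w; split => //; first by apply: twoBlock_wdigraph; lra.
- by rewrite thetaD_twoBlock ?ler01 // mul1r -tW mulfK //; apply/lt0r_neq0.
- by rewrite mac_w tW.
Qed.

Theorem mainTheorem8 (R : realType) (t : R) (ht0 : 0 <= t) (ht1 : t <= 1) :
  (t <= 3^-1 ->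
    forall eps : R, 0 < eps ->
      exists (V : finType) (w : V -> V -> R),
        [/\ is_wdigraph w, 0 < wtot w, thetaD w = t &
            mac w < (1 + eps) * lfun t * wtot w]) /\
  (3^-1 < t ->
      exists (V : finType) (w : V -> V -> R),
        [/\ is_wdigraph w, 0 < wtot w, thetaD w = t &
            mac w = t * wtot w]).
Proof.
split; first by move=> t_le eps eps_gt0; exact: small_theta_construction.
by move=> t_gt; exact: large_theta_construction.
Qed.
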